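(* Let $X$ be a finite set, $k$ an integer with $5<k<|X|-5$, $\mathfrak{C}$ a nonempty symmetric family of choice functions for $\binom{X}{k}$, and $\mathcal{F}$ the set of simple averaging functions for $\mathfrak{C}$. (1) If $f_{r;1,2}\in\mathcal{F}$ then $f_{r;\ell,k'}\in\mathcal{F}$ for all $\ell\ne k'$ in $\{1,\dots,r\}$. (2) If $f_{r;1,2}\in\mathcal{F}$ and $r=r(\mathcal{F})\ge 3$, then $f_{r+1;1,2}\in\mathcal{F}$.
   Context: $\binom{X}{k}=\{Y\subseteq X:|Y|=k\}$; choice functions $c$ satisfy $c(Y)\in Y$. Symmetric: closed under $c\mapsto \pi*c$, $(\pi*c)(Y)=\pi^{-1}(c(\pi(Y)))$ for permutations $\pi$ of $X$. $\mathcal{F}_{[r]}$: functions $f:X^r\to X$ with $f(a,\dots,a)=a$ such that for all $c_1,\dots,c_r\in\mathfrak{C}$, $Y\mapsto f(c_1(Y),\dots,c_r(Y))$ is in $\mathfrak{C}$; $\mathcal{F}=\bigcup_r\mathcal{F}_{[r]}$. A monarchy is a projection $f(\bar x)=x_t$. $r(\mathcal{F})=\min\{r:\text{some } f\in\mathcal{F}_{[r]}\text{ is not a monarchy}\}$. For $\ell\ne k'$ in $\{1,\dots,r\}$, $f_{r;\ell,k'}:X^r\to X$ is defined by $f_{r;\ell,k'}(\bar x)=x_\ell$ if $\bar x$ has a repetition and $f_{r;\ell,k'}(\bar x)=x_{k'}$ otherwise. *)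

From mathcomp Require Import all_boot all_order.
From mathcomp Require Import fingroup perm.
Set Implicit Arguments. Unset Strict Implicit. Unset Printing Implicit Defensive.

Section Defs.
Variables (X : finType) (k : nat).

Definition KS := {Y : {set X} | #|Y| == k}.

Definition is_choice (c : {ffun KS -> X}) : Prop := forall Y : KS, c Y \in val Y.

Lemma permKS_proof (pi : {perm X}) (Y : KS) : #|pi @: val Y| == k.
Proof. by rewrite card_imset ?(valP Y) //; exact: perm_inj. Qed.

Definition permKS (pi : {perm X}) (Y : KS) : KS := @exist {set X} (fun Z => #|Z| == k) (pi @: val Y) (permKS_proof pi Y).

Definition pact (pi : {perm X}) (c : {ffun KS -> X}) : {ffun KS -> X} :=
  [ffun Y => (pi^-1)%g (c (permKS pi Y))].

Definition symmetric_family (C : {set {ffun KS -> X}}) : Prop :=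
  forall (pi : {perm X}) c, c \in C -> pact pi c \in C.

Definition is_avg (C : {set {ffun KS -> X}}) (r : nat) (f : r.-tuple X -> X) : Prop :=
  (forall a : X, f (nseq_tuple r a) = a) /\
  (forall cs : r.-tuple {ffun KS -> X}, (forall i, tnth cs i \in C) ->
     [ffun Y : KS => f (map_tuple (fun c : {ffun KS -> X} => c Y) cs)] \in C).

Definition monarchy (r : nat) (f : r.-tuple X -> X) : Prop :=
  exists t : 'I_r, forall x, f x = tnth x t.

Definition is_rF (C : {set {ffun KS -> X}}) (r : nat) : Prop :=
  (exists f : r.-tuple X -> X, is_avg C f /\ ~ monarchy f) /\
  (forall r', r' < r -> forall f : r'.-tuple X -> X, is_avg C f -> monarchy f).
End Defs.

Definition fLK (X : finType) (r : nat) (l k' : 'I_r) (x : r.-tuple X) : X :=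
  if uniq x then tnth x k' else tnth x l.

(* The indices 1 and 2 of the paper, as 0-based ordinals of 'I_(n+2). *)
Definition idx1 (n : nat) : 'I_n.+2 := ord0.
Definition idx2 (n : nat) : 'I_n.+2 := @Ordinal n.+2 1 isT.

From mathcomp Require Import all_boot all_order.
From mathcomp Require Import fingroup perm.
Set Implicit Arguments. Unset Strict Implicit. Unset Printing Implicit Defensive.

(* Only the clone structure of F is used: it contains the projections and is
   closed under superposition.  (1) The f_{r;l,k'} differ from f_{r;1,2} by a
   permutation of the arguments.  (2) For r >= 3 and x = (a, b, c, w, d),
     f_{r+1;1,2}(x) = f_{r;1,2}(a, u, s, w)
   with u = f_{r;1,2}(a, b, c, w) and s = f_{r;1,r}(b, c, w, d), a superposition
   of members of F. *)

Section Preservation.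
Variables (X : finType) (k : nat) (C : {set {ffun KS X k -> X}}).

Definition preserves m (g : m.-tuple X -> X) : Prop :=
  forall cs : m.-tuple {ffun KS X k -> X}, (forall i, tnth cs i \in C) ->
    [ffun Y => g (map_tuple (fun c : {ffun KS X k -> X} => c Y) cs)] \in C.

Lemma eq_preserves m (g g' : m.-tuple X -> X) : g =1 g' -> preserves g -> preserves g'.
Proof.
move=> eq_g Cg cs Ccs; have := Cg cs Ccs; congr (_ \in C).
by apply/ffunP => Y; rewrite !ffunE eq_g.
Qed.

Lemma preserves_tnth m (j : 'I_m) : preserves (fun x => tnth x j).
Proof.
move=> cs Ccs.
suff -> : [ffun Y => tnth (map_tuple (fun c : {ffun KS X k -> X} => c Y) cs) j] = tnth cs j.
  exact: Ccs.
by apply/ffunP => Y; rewrite ffunE tnth_map.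
Qed.

Lemma preserves_comp r m (f : r.-tuple X -> X) (gs : 'I_r -> m.-tuple X -> X) :
  preserves f -> (forall i, preserves (gs i)) ->
  preserves (fun x => f [tuple gs i x | i < r]).
Proof.
move=> Cf Cgs cs Ccs.
pose ds := [tuple [ffun Y => gs i (map_tuple (fun c : {ffun KS X k -> X} => c Y) cs)] | i < r].
have Cds i : tnth ds i \in C by rewrite tnth_mktuple; apply: Cgs.
have := Cf ds Cds.
congr (_ \in C); apply/ffunP => Y; rewrite !ffunE; congr f.
by apply: eq_from_tnth => i; rewrite tnth_map !tnth_mktuple ffunE.
Qed.

Lemma preserves_reindex r m (f : r.-tuple X -> X) (g : 'I_r -> 'I_m) :
  preserves f -> preserves (fun x => f [tuple tnth x (g i) | i < r]).
Proof. by move=> Cf; apply: preserves_comp => // i; apply: preserves_tnth. Qed.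

End Preservation.

Lemma val_mktuple_nat (T : Type) n (h : nat -> T) :
  val [tuple h (val i) | i < n] = map h (iota 0 n).
Proof. by rewrite /= -val_enum_ord -map_comp. Qed.

Lemma val_reindex_shift (T : Type) m n i0 (x : m.-tuple T) (g : 'I_n -> 'I_m) :
  (forall j, val (g j) = i0 + j) -> val [tuple tnth x (g j) | j < n] = take n (drop i0 x).
Proof.
case: n g => [|n] g gE; first by rewrite take0 tuple0.
pose x0 := tnth x (g ord0).
rewrite (eq_mktuple (fun j : 'I_n.+1 => nth x0 x (i0 + j))); last first.
  by move=> j; rewrite (tnth_nth x0) gE.
rewrite (val_mktuple_nat _ (fun j => nth x0 x (i0 + j))) -(map_nth_iota x0); last first.
  by rewrite size_tuple ltn_subRL -(gE ord_max) ltn_ord.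
by rewrite -(addn0 i0) iotaDl -map_comp addn0.
Qed.

Lemma uniq_reindex_perm (T : eqType) r (x : r.-tuple T) (s : {perm 'I_r}) :
  uniq [tuple tnth x (s i) | i < r] = uniq x.
Proof.
apply/tuple_uniqP/tuple_uniqP => inj_x i j; rewrite ?tnth_mktuple.
  move=> eq_ij; apply: (can_inj (permKV s)); apply: inj_x.
  by rewrite !tnth_mktuple !permKV.
by move/inj_x/perm_inj.
Qed.

Lemma perm_mapping_pair r (i j l k' : 'I_r) : i != j -> l != k' ->
  exists s : {perm 'I_r}, s i = l /\ s j = k'.
Proof.
move=> neq_ij neq_lk; set k1 := tperm i l k'.
have neq_k1i : k1 != i.
  by apply: contraNneq neq_lk => /(congr1 (tperm i l)); rewrite tpermK tpermL => ->.
exists (tperm j k1 * tperm i l)%g; rewrite !permM tpermL tpermK; split=> //.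
by rewrite [tperm j k1 i]tpermD ?tpermL // eq_sym.
Qed.

Lemma fLK_nseq (X : finType) r (l k' : 'I_r) (a : X) : fLK l k' (nseq_tuple r a) = a.
Proof. by rewrite /fLK; case: ifP; rewrite tnth_nseq. Qed.

Lemma fLKE (X : finType) r (l k' : 'I_r) (x : r.-tuple X) (x0 : X) :
  fLK l k' x = if uniq x then nth x0 x k' else nth x0 x l.
Proof. by rewrite /fLK !(tnth_nth x0). Qed.

Lemma fLK_reindex_perm (X : finType) r (l k' : 'I_r) (s : {perm 'I_r}) (x : r.-tuple X) :
  fLK l k' [tuple tnth x (s i) | i < r] = fLK (s l) (s k') x.
Proof. by rewrite /fLK uniq_reindex_perm !tnth_mktuple. Qed.

Lemma preserves_fLK (X : finType) k (C : {set {ffun KS X k -> X}}) r (i j l k' : 'I_r) :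
  i != j -> l != k' -> preserves C (fLK i j) -> preserves C (fLK l k').
Proof.
move=> neq_ij neq_lk Cf; have [s [si sj]] := perm_mapping_pair neq_ij neq_lk.
apply: eq_preserves (preserves_reindex s Cf) => x.
by rewrite fLK_reindex_perm si sj.
Qed.

Lemma uniq_select_rcons (T : eqType) (a b c d : T) w :
  let u := if uniq [:: a, b, c & w] then b else a in
  let s := if uniq [:: b, c & rcons w d] then d else b in
  (if uniq [:: a, b, c & rcons w d] then b else a) = (if uniq [:: a, u, s & w] then u else a).
Proof.
rewrite -!rcons_cons !rcons_uniq.
case abcw: (uniq [:: a, b, c & w]); last by rewrite andbF /= inE eqxx.
have bcw : uniq [:: b, c & w] by case/andP: abcw.
rewrite bcw !andbT.
have [d_bcw|d_bcw] := boolP (d \in [:: b, c & w]).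
  by rewrite inE d_bcw orbT /= mem_head /= andbF.
have [->|da] := eqVneq d a; first by rewrite mem_head /= !inE eqxx orbT.
move: abcw d_bcw; rewrite /= !inE !negb_or.
case/and4P=> /and3P[ab _ aw] /andP[_ bw] _ uw /and3P[db dc dw].
by rewrite (negbTE da) ab aw bw uw db dc dw (eq_sym a) (eq_sym b) da db.
Qed.

Lemma fLK_succ (X : finType) m (x : m.+4.-tuple X) :
  let u := fLK (idx1 m.+1) (idx2 m.+1) [tuple tnth x (widen_ord (leqnSn _) j) | j < m.+3] in
  let s := fLK ord0 ord_max [tuple tnth x (lift ord0 j) | j < m.+3] in
  fLK (idx1 m.+2) (idx2 m.+2) x =
  fLK (idx1 m.+1) (idx2 m.+1)
    [tuple if val i == 1 then u else if val i == 2 then s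
           else tnth x (widen_ord (leqnSn _) i) | i < m.+3].
Proof.
move=> u s.
have [a [b [c [w [d [xE size_w]]]]]] :
    exists a b c w d, val x = [:: a, b, c & rcons w d] /\ size w = m.
  case: x {u s} => /= t; case: t => [|a [|b [|c t]]] //; case/lastP: t => [|w d] //.
  by rewrite /= size_rcons => /eqP[size_w]; exists a, b, c, w, d.
have uE : u = if uniq [:: a, b, c & w] then b else a.
  rewrite /u (fLKE _ _ _ a) (val_reindex_shift (i0 := 0)) // drop0 xE.
  by rewrite /= -cats1 take_size_cat.
have sE : s = if uniq [:: b, c & rcons w d] then d else b.
  rewrite /s (fLKE _ _ _ a) (val_reindex_shift (i0 := 1)) // xE /= take_oversize.
    by rewrite nth_rcons size_w ltnn eqxx.
  by rewrite /= size_rcons size_w.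
pose h j := if j == 1 then u else if j == 2 then s else nth a x j.
have outerE : val [tuple if val i == 1 then u else if val i == 2 then s
                   else tnth x (widen_ord (leqnSn _) i) | i < m.+3] = [:: a, u, s & w].
  rewrite (eq_mktuple (fun i : 'I_m.+3 => h (val i))); last first.
    by move=> i; rewrite /h (tnth_nth a).
  have wE : map h (iota 3 m) = w.
    rewrite (eq_in_map h (nth a x) (iota 3 m)).1; last first.
      by move=> j; rewrite mem_iota /h; case: j => [|[|[|j]]].
    rewrite map_nth_iota; last by rewrite size_tuple leqnSn.
    by rewrite xE /= drop0 -cats1 take_size_cat.
  by rewrite val_mktuple_nat /= wE /h /= xE.
rewrite !(fLKE _ _ _ a) outerE xE /= uE sE.
exact: uniq_select_rcons.
Qed.

Theorem claim2p7 (X : finType) (k : nat) (C : {set {ffun KS X k -> X}}) :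
  5 < k -> k + 5 < #|X| ->
  C != set0 ->
  (forall c, c \in C -> is_choice c) ->
  symmetric_family C ->
  (forall n : nat,
     is_avg C (@fLK X n.+2 (idx1 n) (idx2 n)) ->
     forall l k' : 'I_n.+2, l != k' -> is_avg C (@fLK X n.+2 l k')) /\
  (forall n : nat,
     is_avg C (@fLK X n.+2 (idx1 n) (idx2 n)) ->
     is_rF C n.+2 -> 3 <= n.+2 ->
     is_avg C (@fLK X n.+3 (idx1 n.+1) (idx2 n.+1))).
Proof.
move=> _ _ _ _ _; split=> [n [_ Cf] l k' neq_lk | [|m] [_ Cf] _ // _].
  by split; [exact: fLK_nseq | exact: preserves_fLK Cf].
split; first exact: fLK_nseq.
apply: eq_preserves (fun x => esym (fLK_succ x)) _.
apply: preserves_comp => // i.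
case: (val i == 1); first exact: preserves_reindex.
case: (val i == 2); last exact: preserves_tnth.
by apply: preserves_reindex; apply: preserves_fLK Cf.
Qed.
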